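(* Let $n\ge 2$, $q\ge 2$ be integers, $S_1=\sqrt{q^2+4(q-1)(n-2)}$, let $d$ be an integer and define $j$ by $d=n-1-\frac{n-2+j}{q}$ with $j\in\left[0,\frac{S_1-q}{2}\right)$. Put $d_0=n-\frac{j(n-1)}{q(j+q-1)}$ and let $e\in(0,1]$ be such that $d_0+e$ is an integer. Define $$\begin{aligned} A&=-(q+j-2)[eq(j+q-1)]^2+(n-1)(q-1)(j+q)[n(q-1)-j(q+j-2)]\\&\quad+eq(j+q-1)[(q^2+jq-q-2j)(q+j-2)+2n(q-1)],\\ B&=(n-2+j)(q-1)+j(j-1)+eq(j+q-1),\\ C&=(n-1)(q-1)(j+q)+eq(j+q-1),\\ D&=\Big[(n-1)(q-1)+(2e-1)(j+q-1)\tfrac{q}{2}\Big]^2+(j+q-1)^2\Big[(n-1)(q-1)-\tfrac{q^2}{4}\Big],\\ E&=(j+q-1)^3[(n-1)(q-2)+n-j], \end{aligned}$$ and $$\mu_d^*=\frac{n(q-1)CD[C+q(j+q-1)]}{AB[B+q(j+q-1)]},\quad \mu_{d_0+e-1}^*=\frac{en(q-1)E[C+q(j+q-1)]}{AB},\quad \mu_{d_0+e}^*=\frac{(1-e)n(q-1)CE}{A[B+q(j+q-1)]}.$$ Then for each $l\in\{1,2,3\}$, $$\mu_d^*\frac{K_l^{(n,q)}(d)}{r_l}+\mu_{d_0+e-1}^*\frac{K_l^{(n,q)}(d_0+e-1)}{r_l}+\mu_{d_0+e}^*\frac{K_l^{(n,q)}(d_0+e)}{r_l}=-1.$$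
   Context: $K_l^{(n,q)}(z)=\sum_{i=0}^{l}(-1)^i(q-1)^{l-i}\binom{z}{i}\binom{n-z}{l-i}$ is the Krawtchouk polynomial and $r_l=(q-1)^l\binom{n}{l}$. *)

From HB Require Import structures.
From mathcomp Require Import all_boot all_order all_algebra.
Set Implicit Arguments. Unset Strict Implicit. Unset Printing Implicit Defensive.
Import Order.TTheory GRing.Theory Num.Theory.
Local Open Scope ring_scope.

Definition binr (R : fieldType) (x : R) (k : nat) : R :=
  (\prod_(m < k) (x - m%:R)) / (k`!)%:R.

Definition kraw (R : fieldType) (n q l : nat) (z : R) : R :=
  \sum_(i < l.+1) (-1) ^+ i * (q%:R - 1) ^+ (l - i)
                 * binr z i * binr (n%:R - z) (l - i).

Definition rl (R : fieldType) (n q l : nat) : R :=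
  (q%:R - 1) ^+ l * ('C(n, l))%:R.

(* For l <= 3 the normalized Krawtchouk value K_l(z)/r_l is a polynomial of degree l
   in z, so after substituting z = d, d0 + e - 1, d0 + e the claim becomes an identity
   between rational functions of n, q, j, e, valid wherever the denominators q, q - 1,
   j + q - 1, n, n - 1, n - 2, A, B and B + q(j + q - 1) are nonzero.  The hypothesis
   j < (S1 - q)/2 says j^2 + jq < (q - 1)(n - 2); it yields n > 2 and B > 0 directly,
   and A > 0 because A is concave in e, so that its positivity at e = 0 and e = 1
   propagates to all of (0, 1]. *)

From HB Require Import structures.
From mathcomp Require Import all_boot all_order all_algebra.
From mathcomp Require Import ring lra.
Import Order.TTheory GRing.Theory Num.Theory.
Set Implicit Arguments. Unset Strict Implicit. Unset Printing Implicit Defensive.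
Local Open Scope ring_scope.

Definition krawtchouk (R : fieldType) (n q : R) (l : nat) (z : R) : R :=
  \sum_(i < l.+1) (-1) ^+ i * (q - 1) ^+ (l - i) * binr z i * binr (n - z) (l - i).

Lemma krawE (R : fieldType) (n q l : nat) (z : R) :
  kraw n q l z = krawtchouk n%:R q%:R l z.
Proof. by []. Qed.

Lemma natr_ffact (R : pzRingType) (n k : nat) :
  (n ^_ k)%:R = \prod_(i < k) (n%:R - i%:R) :> R.
Proof.
elim: k => [|k IHk]; first by rewrite ffactn0 big_ord0.
rewrite ffactnSr big_ord_recr /= natrM -IHk.
have [kn | nk] := leqP k n; first by rewrite natrB.
by rewrite ffact_small // !mul0r.
Qed.

Lemma binr_natr (R : numFieldType) (n k : nat) : binr (n%:R : R) k = 'C(n, k)%:R.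
Proof.
rewrite /binr -natr_ffact -bin_ffact natrM mulfK //.
by rewrite pnatr_eq0 -lt0n fact_gt0.
Qed.

Lemma rlE (R : numFieldType) (n q l : nat) :
  rl R n q l = (q%:R - 1) ^+ l * binr n%:R l.
Proof. by rewrite /rl binr_natr. Qed.

Definition coefA (R : pzRingType) (n q j e : R) : R :=
  - (q + j - 2) * (e * q * (j + q - 1)) ^+ 2
  + (n - 1) * (q - 1) * (j + q) * (n * (q - 1) - j * (q + j - 2))
  + e * q * (j + q - 1)
    * ((q ^+ 2 + j * q - q - 2 * j) * (q + j - 2) + 2 * n * (q - 1)).
Definition coefB (R : pzRingType) (n q j e : R) : R :=
  (n - 2 + j) * (q - 1) + j * (j - 1) + e * q * (j + q - 1).
Definition coefC (R : pzRingType) (n q j e : R) : R :=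
  (n - 1) * (q - 1) * (j + q) + e * q * (j + q - 1).
Definition coefD (R : fieldType) (n q j e : R) : R :=
  ((n - 1) * (q - 1) + (2 * e - 1) * (j + q - 1) * (q / 2)) ^+ 2
  + (j + q - 1) ^+ 2 * ((n - 1) * (q - 1) - q ^+ 2 / 4).
Definition coefE (R : pzRingType) (n q j : R) : R :=
  (j + q - 1) ^+ 3 * ((n - 1) * (q - 2) + n - j).

Lemma quad_lt_below_root (R : rcfType) (q a b j : R) : 0 <= q -> 0 <= j ->
  j < (Num.sqrt (q ^+ 2 + 4 * a * b) - q) / 2 -> j ^+ 2 + j * q < a * b.
Proof.
move=> q_ge0 j_ge0 j_lt; have lt_sqrt : 2 * j + q < Num.sqrt (q ^+ 2 + 4 * a * b) by lra.
have [rad_ge0 | rad_lt0] := lerP 0 (q ^+ 2 + 4 * a * b).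
  have : (2 * j + q) ^+ 2 < q ^+ 2 + 4 * a * b.
    by rewrite -(sqr_sqrtr rad_ge0) ltr_pXn2r // ?nnegrE ?sqrtr_ge0; lra.
  nra.
by move: lt_sqrt; rewrite ltr0_sqrtr //; lra.
Qed.

Lemma coefA_concave (R : comPzRingType) (n q j e : R) :
  coefA n q j e = (1 - e) * coefA n q j 0 + e * coefA n q j 1
                  + (q + j - 2) * (q * (j + q - 1)) ^+ 2 * (e * (1 - e)).
Proof. rewrite /coefA; ring. Qed.

Lemma n_gt2 (R : realFieldType) (n q j : R) : 2 <= q -> 0 <= j ->
  j ^+ 2 + j * q < (q - 1) * (n - 2) -> 2 < n.
Proof.
move=> q_ge2 j_ge0 j_small.
have jj_ge0 : 0 <= j ^+ 2 + j * q by rewrite addr_ge0 ?sqr_ge0 ?mulr_ge0 //; lra.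
have : 0 < (q - 1) * (n - 2) by lra.
by rewrite pmulr_rgt0; lra.
Qed.

Lemma coefA0_gt0 (R : realFieldType) (n q j : R) : 2 <= q -> 0 <= j ->
  j ^+ 2 + j * q < (q - 1) * (n - 2) -> 0 < coefA n q j 0.
Proof.
move=> q_ge2 j_ge0 j_small; have n_gt2 := n_gt2 q_ge2 j_ge0 j_small.
have -> : coefA n q j 0 = (n - 1) * (q - 1) * (j + q)
    * (2 * (j + q - 1) + ((q - 1) * (n - 2) - (j ^+ 2 + j * q))) by rewrite /coefA; ring.
by rewrite !mulr_gt0 //; lra.
Qed.

Lemma coefA1_gt0 (R : realFieldType) (n q j : R) : 2 <= q -> 0 <= j ->
  j ^+ 2 + j * q < (q - 1) * (n - 2) -> 0 < coefA n q j 1.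
Proof.
move=> q_ge2 j_ge0 j_small; have n_gt2 := n_gt2 q_ge2 j_ge0 j_small.
set w := j + q - 1; set P := n * (q - 1) - j * (q + j - 2).
have w_ge1 : 1 <= w by rewrite /w; lra.
have w2_lt_P : 2 * w < P.
  suff -> : P = 2 * w + ((q - 1) * (n - 2) - (j ^+ 2 + j * q)) by lra.
  by rewrite /P /w; ring.
have -> : coefA n q j 1 = (n - 1) * (q - 1) * ((w + 1) * P) - j * q * (2 * w * (w - 1))
                          + 2 * q * w * n * (q - 1) by rewrite /coefA /P /w; ring.
have jq_lt : j * q < (n - 1) * (q - 1) by nra.
have ww_lt : 2 * w * (w - 1) < (w + 1) * P by nra.
have : j * q * (2 * w * (w - 1)) <= (n - 1) * (q - 1) * ((w + 1) * P).
  by apply: ler_pM; nra.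
have : 0 < 2 * q * w * n * (q - 1) by rewrite !mulr_gt0 //; lra.
lra.
Qed.

Lemma coefA_gt0 (R : realFieldType) (n q j e : R) : 2 <= q -> 0 <= j ->
  j ^+ 2 + j * q < (q - 1) * (n - 2) -> 0 < e -> e <= 1 -> 0 < coefA n q j e.
Proof.
move=> q_ge2 j_ge0 j_small e_gt0 e_le1; rewrite coefA_concave.
have := coefA0_gt0 q_ge2 j_ge0 j_small; have := coefA1_gt0 q_ge2 j_ge0 j_small.
have : 0 <= (q + j - 2) * (q * (j + q - 1)) ^+ 2 * (e * (1 - e)).
  by rewrite !mulr_ge0 ?sqr_ge0 //; lra.
nra.
Qed.

Lemma coefB_gt0 (R : realFieldType) (n q j e : R) : 2 <= q -> 0 <= j ->
  j ^+ 2 + j * q < (q - 1) * (n - 2) -> 0 <= e -> 0 < coefB n q j e.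
Proof.
move=> q_ge2 j_ge0 j_small e_ge0.
have -> : coefB n q j e = ((q - 1) * (n - 2) - (j ^+ 2 + j * q))
    + 2 * j * (j + q - 1) + e * q * (j + q - 1) by rewrite /coefB; ring.
have : 0 <= e * q * (j + q - 1) by rewrite !mulr_ge0 //; lra.
have : 0 <= 2 * j * (j + q - 1) by rewrite !mulr_ge0 //; lra.
lra.
Qed.

Section DesignIdentity.
Variables (R : numFieldType) (n q j e : R).

Let W := q * (j + q - 1).
Let A := coefA n q j e.
Let B := coefB n q j e.
Let C := coefC n q j e.

Definition mu_d : R := n * (q - 1) * C * coefD n q j e * (C + W) / (A * B * (B + W)).
Definition mu_1 : R := e * n * (q - 1) * coefE n q j * (C + W) / (A * B).
Definition mu_2 : R := (1 - e) * n * (q - 1) * C * coefE n q j / (A * (B + W)).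

Hypotheses (q_neq0 : q != 0) (q1_neq0 : q - 1 != 0) (w_neq0 : j + q - 1 != 0)
  (n_neq0 : n != 0) (n1_neq0 : n - 1 != 0) (n2_neq0 : n - 2 != 0)
  (A_neq0 : A != 0) (B_neq0 : B != 0) (BW_neq0 : B + W != 0).

Lemma design_identity (l : nat) : (1 <= l <= 3)%N ->
  let d := n - 1 - (n - 2 + j) / q in
  let d0 := n - j * (n - 1) / (q * (j + q - 1)) in
  let r := (q - 1) ^+ l * binr n l in
  mu_d * (krawtchouk n q l d / r) + mu_1 * (krawtchouk n q l (d0 + e - 1) / r)
  + mu_2 * (krawtchouk n q l (d0 + e) / r) = -1.
Proof.
case: l => [|[|[|[|l]]]] // _ d d0 r;
  rewrite /r /mu_d /mu_1 /mu_2 /krawtchouk /binr /d /d0 /W /A /B /C;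
  rewrite /coefA /coefB /coefC /coefD /coefE !big_ord_recr !big_ord0 /=;
  rewrite ?big_ord_recr ?big_ord0 /= ?big_ord_recr ?big_ord0 /= ?factS ?fact0 /=;
  field; by repeat (apply/andP; split).
Qed.
End DesignIdentity.

Theorem lemma3 (R : rcfType) (n q : nat) (d : int) (j e : R) :
  (2 <= n)%N -> (2 <= q)%N ->
  let nR : R := n%:R in
  let qR : R := q%:R in
  let S1 : R := Num.sqrt (qR ^+ 2 + 4 * (qR - 1) * (nR - 2)) in
  d%:~R = nR - 1 - (nR - 2 + j) / qR ->
  0 <= j -> j < (S1 - qR) / 2 ->
  let d0 : R := nR - j * (nR - 1) / (qR * (j + qR - 1)) in
  0 < e -> e <= 1 -> (exists m : int, d0 + e = m%:~R) ->
  let A : R := - (qR + j - 2) * (e * qR * (j + qR - 1)) ^+ 2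
      + (nR - 1) * (qR - 1) * (j + qR) * (nR * (qR - 1) - j * (qR + j - 2))
      + e * qR * (j + qR - 1)
        * ((qR ^+ 2 + j * qR - qR - 2 * j) * (qR + j - 2) + 2 * nR * (qR - 1)) in
  let B : R := (nR - 2 + j) * (qR - 1) + j * (j - 1) + e * qR * (j + qR - 1) in
  let C : R := (nR - 1) * (qR - 1) * (j + qR) + e * qR * (j + qR - 1) in
  let D : R := ((nR - 1) * (qR - 1) + (2 * e - 1) * (j + qR - 1) * (qR / 2)) ^+ 2
      + (j + qR - 1) ^+ 2 * ((nR - 1) * (qR - 1) - qR ^+ 2 / 4) in
  let E : R := (j + qR - 1) ^+ 3 * ((nR - 1) * (qR - 2) + nR - j) in
  let mu_d : R := nR * (qR - 1) * C * D * (C + qR * (j + qR - 1))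
      / (A * B * (B + qR * (j + qR - 1))) in
  let mu_1 : R := e * nR * (qR - 1) * E * (C + qR * (j + qR - 1)) / (A * B) in
  let mu_2 : R := (1 - e) * nR * (qR - 1) * C * E
      / (A * (B + qR * (j + qR - 1))) in
  forall l : nat, (1 <= l <= 3)%N ->
    mu_d * (kraw n q l (d%:~R : R) / rl R n q l)
    + mu_1 * (kraw n q l (d0 + e - 1) / rl R n q l)
    + mu_2 * (kraw n q l (d0 + e) / rl R n q l) = -1.
Proof.
move=> n_ge2 q_ge2 nR qR ? d_def j_ge0 j_lt ? e_gt0 e_le1 _ ? ? ? ? ? ? ? ? l l_range.
have qR_ge2 : 2 <= qR by rewrite /qR (ler_nat R 2 q).
have nR_ge2 : 2 <= nR by rewrite /nR (ler_nat R 2 n).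
have j_small : j ^+ 2 + j * qR < (qR - 1) * (nR - 2).
  by apply: quad_lt_below_root j_lt; lra.
have nR_gt2 := n_gt2 qR_ge2 j_ge0 j_small.
have A_gt0 : 0 < coefA nR qR j e by apply: coefA_gt0.
have B_gt0 : 0 < coefB nR qR j e by apply: coefB_gt0; lra.
have w_gt0 : 0 < j + qR - 1 by lra.
have BW_gt0 : 0 < coefB nR qR j e + qR * (j + qR - 1) by rewrite addr_gt0 ?mulr_gt0 //; lra.
rewrite d_def !krawE rlE.
by apply: design_identity l_range; rewrite gt_eqF // ?subr_gt0 //; lra.
Qed.
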